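(* Let $K$ be a non-zero real constant. Let $J\subset(0,\infty)$ be an open interval and $u:J\to\mathbb{R}$ a smooth function with $u'(\alpha)\neq0$ on $J$. The rotational surface in $(\mathbb{R}^3,\|\cdot\|)$ given by $\bar f(\alpha,v)=(\alpha\cos v,\ \alpha\sin v,\ u(\alpha))$ has constant Minkowski Gaussian curvature $K$ if and only if there are a constant $c_1$ and a fixed sign such that $0<K\alpha^2+c_1<1$ for all $\alpha\in J$ and $$u'(\alpha)=\pm\frac{(K\alpha^2+c_1)^{\frac{2m-1}{2}}}{\left\{1-(K\alpha^2+c_1)^m\right\}^{\frac{2m-1}{2m}}}\qquad(\alpha\in J),$$ i.e. $u(\alpha)=\pm\int\frac{(K\alpha^2+c_1)^{\frac{2m-1}{2}}}{\{1-(K\alpha^2+c_1)^m\}^{\frac{2m-1}{2m}}}\,d\alpha$.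
   Context: Fix an integer $m\ge 2$. Let $\Phi(x_1,x_2,x_3)=(x_1^2+x_2^2)^m+x_3^{2m}$ and let $\|\cdot\|$ be the norm on $\mathbb{R}^3$ whose unit sphere is $S=\{x\in\mathbb{R}^3:\Phi(x)=1\}$ (a smooth, strictly convex surface). For a surface given by a parametrization $f(s,v)$, its Birkhoff–Gauss map $\eta$ is the map into $S$ defined by requiring $\eta\in S$ and $\nabla\Phi(\eta)=\mu\, f_s\times f_v$ for some function $\mu>0$, where $\times$ is the standard cross product (so the tangent plane of $S$ at $\eta(p)$ is parallel to $T_pM$, and $d\eta_p$ is an endomorphism of $T_pM$). The Minkowski Gaussian curvature is $K=\det(d\eta_p)$ (it does not depend on the choice of orientation). *)

From Stdlib Require Import Reals.
From Coquelicot Require Import Coquelicot.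
Open Scope R_scope.

Definition V3 : Type := (R * R * R)%type.
Definition c1 (x : V3) : R := fst (fst x).
Definition c2 (x : V3) : R := snd (fst x).
Definition c3 (x : V3) : R := snd x.
Definition mk3 (a b c : R) : V3 := (a, b, c).

Definition vadd (x y : V3) : V3 := mk3 (c1 x + c1 y) (c2 x + c2 y) (c3 x + c3 y).
Definition vscal (k : R) (x : V3) : V3 := mk3 (k * c1 x) (k * c2 x) (k * c3 x).
Definition cross (x y : V3) : V3 :=
  mk3 (c2 x * c3 y - c3 x * c2 y)
      (c3 x * c1 y - c1 x * c3 y)
      (c1 x * c2 y - c2 x * c1 y).

(** Phi(x) = (x1^2 + x2^2)^m + x3^(2m); the unit sphere S of the norm is {Phi = 1}. *)
Definition Phi (m : nat) (x : V3) : R :=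
  (c1 x ^ 2 + c2 x ^ 2) ^ m + c3 x ^ (2 * m).

Definition gradPhi (m : nat) (x : V3) : V3 :=
  mk3 (Derive (fun t => Phi m (mk3 t (c2 x) (c3 x))) (c1 x))
      (Derive (fun t => Phi m (mk3 (c1 x) t (c3 x))) (c2 x))
      (Derive (fun t => Phi m (mk3 (c1 x) (c2 x) t)) (c3 x)).

Definition pd_s (F : R -> R -> V3) (s v : R) : V3 :=
  mk3 (Derive (fun t => c1 (F t v)) s)
      (Derive (fun t => c2 (F t v)) s)
      (Derive (fun t => c3 (F t v)) s).
Definition pd_v (F : R -> R -> V3) (s v : R) : V3 :=
  mk3 (Derive (fun t => c1 (F s t)) v)
      (Derive (fun t => c2 (F s t)) v)
      (Derive (fun t => c3 (F s t)) v).

Definition ex_pd (F : R -> R -> V3) (s v : R) : Prop :=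
  ex_derive (fun t => c1 (F t v)) s /\ ex_derive (fun t => c2 (F t v)) s /\
  ex_derive (fun t => c3 (F t v)) s /\
  ex_derive (fun t => c1 (F s t)) v /\ ex_derive (fun t => c2 (F s t)) v /\
  ex_derive (fun t => c3 (F s t)) v.

Definition BirkhoffGaussMap (m : nat) (f eta : R -> R -> V3)
    (D : R -> R -> Prop) : Prop :=
  forall s v, D s v ->
    Phi m (eta s v) = 1 /\
    exists mu : R, 0 < mu /\
      gradPhi m (eta s v) = vscal mu (cross (pd_s f s v) (pd_v f s v)).

(** The Minkowski Gaussian curvature at p = (s,v) equals k: d eta_p, as an
    endomorphism of T_pM = span(f_s, f_v), has matrix [[a, c], [b, d]] in the
    basis (f_s, f_v), i.e. eta_s = a f_s + b f_v, eta_v = c f_s + d f_v, and its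
    determinant a d - b c is k. *)
Definition MinkGaussCurvAt (f eta : R -> R -> V3) (s v k : R) : Prop :=
  ex_pd eta s v /\
  exists a b c d : R,
    pd_s eta s v = vadd (vscal a (pd_s f s v)) (vscal b (pd_v f s v)) /\
    pd_v eta s v = vadd (vscal c (pd_s f s v)) (vscal d (pd_v f s v)) /\
    a * d - b * c = k.

(** The surface f (on parameter domain D) has constant Minkowski Gaussian
    curvature k: its Birkhoff-Gauss map exists and, for (any, hence the unique)
    Birkhoff-Gauss map eta, the curvature equals k at every point. *)
Definition ConstMinkGaussCurv (m : nat) (f : R -> R -> V3)
    (D : R -> R -> Prop) (k : R) : Prop :=
  (exists eta, BirkhoffGaussMap m f eta D) /\
  forall eta, BirkhoffGaussMap m f eta D ->
    forall s v, D s v -> MinkGaussCurvAt f eta s v k.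

Definition rotSurf (u : R -> R) (alpha v : R) : V3 :=
  mk3 (alpha * cos v) (alpha * sin v) (u alpha).

Definition inJ (a : R) (b : Rbar) (x : R) : Prop := a < x /\ Rbar_lt x b.

(* A Birkhoff-Gauss map of the surface of revolution is again rotational,
   eta(alpha, v) = (r(alpha) cos v, r(alpha) sin v, z(alpha)), where (r, z) is the unique point
   of the meridian r^(2m) + z^(2m) = 1, z > 0, of S whose normal is parallel to (-u'(alpha), 1),
   i.e. r^(2m-1) = -u' z^(2m-1).  Differentiating the meridian equation gives z' = u' r', so in
   the basis (f_alpha, f_v) the differential of eta is diag(r', r/alpha) and the Minkowski
   Gaussian curvature is r r'/alpha.  It equals K iff r^2 = K alpha^2 + c1; then r does not
   vanish (as u' <> 0), keeps its sign on J, and solving the meridian equations for u' in terms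
   of r^2 gives the formula. *)

From Pilot Require Import Defs.
From Stdlib Require Import Reals Lra Lia Psatz.
From Coquelicot Require Import Coquelicot.
(* Imported again so that [c1] is the coordinate of [Defs], not [RiemannInt.c1]. *)
Import Defs.
Open Scope R_scope.

Lemma pow_lt_pow_l n x y : (0 < n)%nat -> 0 <= x < y -> x ^ n < y ^ n.
Proof.
intros Hn [Hx Hxy]; induction n as [|n IH]; [lia|].
destruct n as [|n]; [simpl; lra|].
change (x * x ^ S n < y * y ^ S n).
pose proof (IH ltac:(lia)); pose proof (pow_le x (S n) Hx); nra.
Qed.

Lemma pow_inj_l n x y : (0 < n)%nat -> 0 <= x -> 0 <= y -> x ^ n = y ^ n -> x = y.
Proof.
intros Hn Hx Hy E; destruct (Rtotal_order x y) as [h|[h|h]]; auto.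
- pose proof (pow_lt_pow_l n x y Hn ltac:(lra)); lra.
- pose proof (pow_lt_pow_l n y x Hn ltac:(lra)); lra.
Qed.

Lemma pow_odd_opp n x : (- x) ^ (2 * n + 1) = - x ^ (2 * n + 1).
Proof. rewrite !pow_add, !pow_mult; replace ((- x) ^ 2) with (x ^ 2) by ring; ring. Qed.

Lemma pow_odd_lt n x y : x < y -> x ^ (2 * n + 1) < y ^ (2 * n + 1).
Proof.
intros Hxy.
assert (Hpos : forall t, 0 < t -> 0 < t ^ (2 * n + 1)) by (intros; apply pow_lt; lra).
destruct (Rle_lt_dec 0 x) as [Hx|Hx]; [apply pow_lt_pow_l; lia || lra|].
destruct (Rle_lt_dec y 0) as [Hy|Hy].
- pose proof (pow_lt_pow_l (2 * n + 1) (- y) (- x) ltac:(lia) ltac:(lra)) as E.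
  rewrite !pow_odd_opp in E; lra.
- pose proof (Hpos y Hy); pose proof (Hpos (- x) ltac:(lra)) as E.
  rewrite pow_odd_opp in E; lra.
Qed.

Lemma pow_odd_inj n x y : x ^ (2 * n + 1) = y ^ (2 * n + 1) -> x = y.
Proof.
intros E; destruct (Rtotal_order x y) as [h|[h|h]]; auto.
- pose proof (pow_odd_lt n x y h); lra.
- pose proof (pow_odd_lt n y x h); lra.
Qed.

Lemma pow_odd_pos n x : 0 < x ^ (2 * n + 1) -> 0 < x.
Proof.
intros H; destruct (Rlt_le_dec 0 x) as [|Hx]; auto.
destruct (Req_dec x 0) as [->|Hx0]; [rewrite pow_i in H by lia; lra|].
pose proof (pow_odd_lt n x 0 ltac:(lra)) as E; rewrite pow_i in E by lia; lra.
Qed.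

Lemma Rpower_mult_INR x y k : 0 < x -> Rpower x (y * INR k) = Rpower x y ^ k.
Proof. intros Hx; rewrite <- Rpower_mult; apply Rpower_pow; unfold Rpower; apply exp_pos. Qed.

Lemma ex_derive_continuity_pt (f : R -> R) x : ex_derive f x -> continuity_pt f x.
Proof. intros H; apply continuity_pt_filterlim, (ex_derive_continuous f x H). Qed.

Section ConvexDomain.

Variable P : R -> Prop.
Hypothesis P_convex : forall x y t, P x -> P y -> x <= t <= y -> P t.

Lemma is_derive_0_const (g : R -> R) :
  (forall x, P x -> is_derive g x 0) -> forall x y, P x -> P y -> g x = g y.
Proof.
intros Hg x y Hx Hy.
assert (HP : forall t, Rmin x y <= t <= Rmax x y -> P t).
{ unfold Rmin, Rmax; destruct (Rle_dec x y); intros t Ht.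
  - apply (P_convex x y); auto.
  - apply (P_convex y x); auto; lra. }
destruct (MVT_gen g x y (fun _ => 0)) as [c [_ Hc]].
- intros t Ht; apply Hg, HP; lra.
- intros t Ht; apply ex_derive_continuity_pt; eexists; apply Hg, HP; auto.
- lra.
Qed.

Lemma nonvanishing_pos (f : R -> R) :
  (forall x, P x -> ex_derive f x) -> (forall x, P x -> f x <> 0) ->
  forall x y, P x -> P y -> 0 < f x -> 0 < f y.
Proof.
intros Hd Hnz x y Hx Hy Hfx.
destruct (Rlt_le_dec 0 (f y)) as [|Hfy]; auto; exfalso.
assert (Hfy' : f y < 0) by (pose proof (Hnz y Hy); lra).
assert (Hcont : forall t, P t -> continuity_pt f t)
  by (intros t Ht; apply ex_derive_continuity_pt, Hd, Ht).
destruct (Rtotal_order x y) as [Hxy|[->|Hxy]]; [|lra|].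
- destruct (Ranalysis5.IVT_interv (fun t => - f t) x y) as [c [Hc Hfc]]; try lra.
  + intros t Ht; apply continuity_pt_opp, Hcont, (P_convex x y); auto.
  + apply (Hnz c); [apply (P_convex x y)|]; auto; lra.
- destruct (Ranalysis5.IVT_interv f y x) as [c [Hc Hfc]]; try lra.
  + intros t Ht; apply Hcont, (P_convex y x); auto.
  + apply (Hnz c); [apply (P_convex y x)|]; auto.
Qed.

Lemma nonvanishing_sign (f : R -> R) x0 :
  (forall x, P x -> ex_derive f x) -> (forall x, P x -> f x <> 0) -> P x0 ->
  exists eps, (eps = 1 \/ eps = -1) /\ forall x, P x -> f x = eps * Rabs (f x).
Proof.
intros Hd Hnz Hx0.
destruct (Rlt_le_dec 0 (f x0)) as [Hpos|Hneg]; [exists 1|exists (-1)]; split; auto;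
  intros x Hx; pose proof (Hnz x Hx).
- pose proof (nonvanishing_pos f Hd Hnz x0 x Hx0 Hx Hpos).
  rewrite Rabs_pos_eq; lra.
- assert (Hd' : forall y, P y -> ex_derive (fun t => - f t) y)
    by (intros y Hy; pose proof (Hd y Hy); auto_derive; auto).
  assert (Hnz' : forall y, P y -> - f y <> 0) by (intros y Hy; pose proof (Hnz y Hy); lra).
  pose proof (Hnz x0 Hx0).
  pose proof (nonvanishing_pos _ Hd' Hnz' x0 x Hx0 Hx ltac:(lra)).
  rewrite Rabs_left; lra.
Qed.

End ConvexDomain.

Lemma inJ_convex a b x y t : inJ a b x -> inJ a b y -> x <= t <= y -> inJ a b t.
Proof. unfold inJ; destruct b as [b'| |]; simpl; intros; lra. Qed.

Lemma inJ_locally a b x : inJ a b x -> locally x (inJ a b).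
Proof.
apply locally_open; [|auto].
apply (open_and (fun t : R => Rbar_lt a t) (fun t : R => Rbar_lt t b));
  [apply open_Rbar_gt|apply open_Rbar_lt].
Qed.

Lemma inJ_inhabited (a : R) (b : Rbar) : Rbar_lt a b -> exists x, inJ a b x.
Proof.
unfold inJ; destruct b as [b'| |]; simpl; intros H; [exists ((a + b') / 2)|exists (a + 1)|]; simpl; lra.
Qed.

Lemma inJ_pos a b t : 0 <= a -> inJ a b t -> 0 < t.
Proof. intros Ha [Ht _]; lra. Qed.

(* [(r, z)] is the point of the meridian [r^(2m) + z^(2m) = 1, z > 0] of [S] at which the
   normal [(r^(2m-1), z^(2m-1))] is parallel to [(-p, 1)], the normal of a meridian of slope [p]. *)
Definition bg_profile (m : nat) (p r z : R) : Prop :=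
  0 < z /\ r ^ (2 * m) + z ^ (2 * m) = 1 /\ r ^ (2 * m - 1) = - p * z ^ (2 * m - 1).

Definition meridian_slope (m : nat) (eps w : R) : R :=
  eps * Rpower w ((2 * INR m - 1) / 2)
    / Rpower (1 - w ^ m) ((2 * INR m - 1) / (2 * INR m)).

Section Profile.

Variable m : nat.
Hypothesis m_pos : (1 <= m)%nat.

Lemma pow_2m1 x : x ^ (2 * m - 1) = x ^ (2 * (m - 1) + 1).
Proof. f_equal; lia. Qed.

Lemma pow_2m1_sqr x : x ^ (2 * m - 1) = (x ^ 2) ^ (m - 1) * x.
Proof. rewrite pow_2m1, pow_add, pow_mult by auto; ring. Qed.

Lemma bg_profile_unique p r z r' z' :
  bg_profile m p r z -> bg_profile m p r' z' -> r = r' /\ z = z'.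
Proof.
intros [Hz [H1 H2]] [Hz' [H1' H2']].
assert (Hzp : 0 < z ^ (2 * m - 1)) by (apply pow_lt; lra).
assert (Hzp' : 0 < z' ^ (2 * m - 1)) by (apply pow_lt; lra).
(* the ratio [r / z] is the odd root of [-p] *)
assert (Ek : r / z = r' / z').
{ apply (pow_odd_inj (m - 1)); rewrite <- !pow_2m1; unfold Rdiv.
  rewrite !Rpow_mult_distr, !pow_inv, H2, H2'; field; lra. }
assert (Ez : z = z').
{ apply (pow_inj_l (2 * m)); [lia|lra|lra|].
  replace r with (r / z * z) in H1 by (field; lra).
  replace r' with (r' / z' * z') in H1' by (field; lra).
  rewrite Rpow_mult_distr in H1, H1'; rewrite Ek in H1.
  assert (0 <= (r' / z') ^ (2 * m)) by (rewrite pow_mult; apply pow_le, pow2_ge_0).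
  nra. }
subst z'; split; auto.
replace r with (r / z * z) by (field; lra); rewrite Ek; field; lra.
Qed.

Lemma bg_profile_slope_unique p p' r z z' :
  bg_profile m p r z -> bg_profile m p' r z' -> p = p'.
Proof.
intros [Hz [H1 H2]] [Hz' [H1' H2']].
assert (Ez : z = z') by (apply (pow_inj_l (2 * m)); lia || lra).
subst z'.
assert (Hzp : 0 < z ^ (2 * m - 1)) by (apply pow_lt; lra).
apply Rmult_eq_reg_r with (- z ^ (2 * m - 1)); lra.
Qed.

Lemma bg_profile_neq0 p r z : p <> 0 -> bg_profile m p r z -> r <> 0.
Proof.
intros Hp [Hz [_ H2]] ->; rewrite pow_i in H2 by lia.
pose proof (pow_lt z (2 * m - 1) Hz); nra.
Qed.

Lemma bg_profile_sqr_lt1 p r z : bg_profile m p r z -> r ^ 2 < 1.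
Proof.
intros [Hz [H1 _]]; rewrite pow_mult in H1.
pose proof (pow_lt z (2 * m) Hz).
destruct (Rlt_le_dec (r ^ 2) 1) as [|Hr]; auto.
pose proof (pow_R1_Rle (r ^ 2) m Hr); lra.
Qed.

Lemma bg_profile_explicit eps w : (eps = 1 \/ eps = -1) -> 0 < w < 1 ->
  bg_profile m (meridian_slope m eps w) (- eps * sqrt w) (Rpower (1 - w ^ m) (/ (2 * INR m))).
Proof.
intros Heps Hw.
assert (Hm : 0 < INR m) by (apply lt_0_INR; lia).
assert (Hwm : 0 < 1 - w ^ m) by (pose proof (pow_lt_1_compat w m ltac:(lra) ltac:(lia)); lra).
set (z := Rpower (1 - w ^ m) (/ (2 * INR m))).
assert (Hz : 0 < z) by apply exp_pos.
assert (Hz2m : z ^ (2 * m) = 1 - w ^ m).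
{ unfold z; rewrite <- Rpower_mult_INR by lra; rewrite mult_INR.
  replace (/ (2 * INR m) * (INR 2 * INR m)) with 1 by (simpl; field; lra).
  apply Rpower_1; lra. }
assert (E2m1 : INR (2 * m - 1) = 2 * INR m - 1)
  by (rewrite minus_INR, mult_INR by lia; simpl; ring).
assert (Ew : Rpower w ((2 * INR m - 1) / 2) = sqrt w ^ (2 * m - 1)).
{ rewrite <- Rpower_sqrt, <- Rpower_mult_INR, E2m1 by lra; f_equal; field. }
assert (Ez : Rpower (1 - w ^ m) ((2 * INR m - 1) / (2 * INR m)) = z ^ (2 * m - 1)).
{ unfold z; rewrite <- Rpower_mult_INR, E2m1 by lra; f_equal; field; lra. }
assert (Hzp : 0 < z ^ (2 * m - 1)) by (apply pow_lt; lra).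
split; [|split]; auto.
- rewrite Hz2m, pow_mult, Rpow_mult_distr, pow2_sqrt by lra.
  replace ((- eps) ^ 2 * w) with w by (destruct Heps as [->| ->]; ring); ring.
- unfold meridian_slope; rewrite Ew, Ez, Rpow_mult_distr, (pow_2m1 (- eps)), pow_add, pow_mult.
  replace ((- eps) ^ 2) with 1 by (destruct Heps as [->| ->]; ring).
  rewrite pow1; field; lra.
Qed.

End Profile.

Lemma vscal_vscal k l x : vscal k (vscal l x) = vscal (k * l) x.
Proof. unfold vscal at 1 2 3; apply (f_equal3 mk3); unfold vscal, mk3, c1, c2, c3; cbn [fst snd]; ring. Qed.

Lemma gradPhi_mk3 m x1 x2 x3 : (1 <= m)%nat ->
  gradPhi m (mk3 x1 x2 x3) =
  vscal (2 * INR m) (mk3 ((x1 ^ 2 + x2 ^ 2) ^ (m - 1) * x1)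
                         ((x1 ^ 2 + x2 ^ 2) ^ (m - 1) * x2) (x3 ^ (2 * m - 1))).
Proof.
intros Hm; unfold gradPhi, vscal; apply (f_equal3 mk3);
  unfold Phi, mk3, c1, c2, c3; cbn [fst snd]; apply is_derive_unique; auto_derive; auto.
all: rewrite ?Nat.sub_1_r, ?plus_INR; simpl; ring.
Qed.

Definition rotational_map (r z : R -> R) (t v : R) : V3 :=
  mk3 (r t * cos v) (r t * sin v) (z t).

Lemma pd_s_rotational (r z : R -> R) t v : ex_derive r t ->
  pd_s (rotational_map r z) t v = mk3 (Derive r t * cos v) (Derive r t * sin v) (Derive z t).
Proof.
intros Hr; unfold pd_s; apply (f_equal3 mk3); [| |reflexivity];
  unfold rotational_map, mk3, c1, c2, c3; cbn [fst snd];
  apply is_derive_unique; auto_derive; auto; rewrite Rmult_1_l; reflexivity.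
Qed.

Lemma pd_v_rotational (r z : R -> R) t v :
  pd_v (rotational_map r z) t v = mk3 (- (r t * sin v)) (r t * cos v) 0.
Proof.
unfold pd_v; apply (f_equal3 mk3); unfold rotational_map, mk3, c1, c2, c3; cbn [fst snd];
  apply is_derive_unique; auto_derive; auto; ring.
Qed.

Lemma cos_sin_pow2 v : cos v ^ 2 + sin v ^ 2 = 1.
Proof. rewrite <- !Rsqr_pow2, Rplus_comm; apply sin2_cos2. Qed.

Lemma pd_s_rotSurf u al v : pd_s (rotSurf u) al v = mk3 (cos v) (sin v) (Derive u al).
Proof.
change (rotSurf u) with (rotational_map (fun t => t) u).
rewrite pd_s_rotational, Derive_id by apply ex_derive_id.
apply (f_equal3 mk3); ring.
Qed.

Lemma pd_v_rotSurf u al v : pd_v (rotSurf u) al v = mk3 (- (al * sin v)) (al * cos v) 0.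
Proof. exact (pd_v_rotational (fun t => t) u al v). Qed.

Lemma cross_rotSurf u al v :
  cross (pd_s (rotSurf u) al v) (pd_v (rotSurf u) al v) =
  vscal al (mk3 (- (Derive u al * cos v)) (- (Derive u al * sin v)) 1).
Proof.
rewrite pd_s_rotSurf, pd_v_rotSurf; unfold cross, vscal; apply (f_equal3 mk3);
  unfold mk3, c1, c2, c3; cbn [fst snd]; [ring|ring|].
transitivity (al * (cos v ^ 2 + sin v ^ 2)); [ring|rewrite cos_sin_pow2; ring].
Qed.

Lemma rotation_inj c s x y x' y' : c ^ 2 + s ^ 2 = 1 ->
  x * c - y * s = x' * c - y' * s -> x * s + y * c = x' * s + y' * c -> x = x' /\ y = y'.
Proof.
intros Hcs E1 E2; split.
- transitivity (c * (x * c - y * s) + s * (x * s + y * c)).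
  + transitivity (x * (c ^ 2 + s ^ 2)); [rewrite Hcs|]; ring.
  + rewrite E1, E2; transitivity (x' * (c ^ 2 + s ^ 2)); [|rewrite Hcs]; ring.
- transitivity (c * (x * s + y * c) - s * (x * c - y * s)).
  + transitivity (y * (c ^ 2 + s ^ 2)); [rewrite Hcs|]; ring.
  + rewrite E1, E2; transitivity (y' * (c ^ 2 + s ^ 2)); [|rewrite Hcs]; ring.
Qed.

Lemma collinear_unit c s x1 x2 : c ^ 2 + s ^ 2 = 1 -> x1 * s = x2 * c ->
  x1 = (x1 * c + x2 * s) * c /\ x2 = (x1 * c + x2 * s) * s.
Proof.
intros Hcs Hpar; split.
- transitivity (x1 * (c ^ 2 + s ^ 2)); [rewrite Hcs; ring|].
  replace (x1 * (c ^ 2 + s ^ 2)) with (x1 * c * c + x1 * s * s) by ring; rewrite Hpar; ring.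
- transitivity (x2 * (c ^ 2 + s ^ 2)); [rewrite Hcs; ring|].
  replace (x2 * (c ^ 2 + s ^ 2)) with (x2 * c * c + x2 * s * s) by ring; rewrite <- Hpar; ring.
Qed.

Section MeridianPoint.

Variable m : nat.
Hypothesis m_pos : (1 <= m)%nat.
Variables c s : R.
Hypothesis cs_unit : c ^ 2 + s ^ 2 = 1.

Lemma bg_point_profile p lam x : 0 < lam -> Phi m x = 1 ->
  gradPhi m x = vscal lam (mk3 (- (p * c)) (- (p * s)) 1) ->
  exists r z, x = mk3 (r * c) (r * s) z /\ bg_profile m p r z.
Proof.
intros Hlam HPhi HG; destruct x as [[x1 x2] z]; change (x1, x2, z) with (mk3 x1 x2 z) in *.
rewrite gradPhi_mk3 in HG by auto.
set (q := (x1 ^ 2 + x2 ^ 2) ^ (m - 1)) in HG.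
assert (Hm : 0 < INR m) by (apply lt_0_INR; lia).
assert (E1 : 2 * INR m * (q * x1) = lam * - (p * c)) by exact (f_equal c1 HG).
assert (E2 : 2 * INR m * (q * x2) = lam * - (p * s)) by exact (f_equal c2 HG).
assert (E3 : 2 * INR m * z ^ (2 * m - 1) = lam * 1) by exact (f_equal c3 HG).
assert (Hpar : x1 * s = x2 * c).
{ destruct (Req_dec q 0) as [Hq|Hq].
  - destruct (Req_dec (x1 ^ 2 + x2 ^ 2) 0) as [Hsum|Hsum].
    + assert (x1 = 0) by nra; assert (x2 = 0) by nra; subst; ring.
    + exfalso; exact (pow_nonzero _ (m - 1) Hsum Hq).
  - apply Rmult_eq_reg_l with (2 * INR m * q); [|apply Rmult_integral_contrapositive; lra].
    replace (2 * INR m * q * (x1 * s)) with (s * (2 * INR m * (q * x1))) by ring.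
    replace (2 * INR m * q * (x2 * c)) with (c * (2 * INR m * (q * x2))) by ring.
    rewrite E1, E2; ring. }
destruct (collinear_unit c s x1 x2 cs_unit Hpar) as [Hx1 Hx2].
set (r := x1 * c + x2 * s) in Hx1, Hx2.
assert (Hsq : x1 ^ 2 + x2 ^ 2 = r ^ 2).
{ rewrite Hx1, Hx2; transitivity (r ^ 2 * (c ^ 2 + s ^ 2)); [ring|rewrite cs_unit; ring]. }
exists r, z; split; [rewrite <- Hx1, <- Hx2; reflexivity|].
split; [|split].
- apply (pow_odd_pos (m - 1)); rewrite <- pow_2m1 by auto.
  apply Rmult_lt_reg_l with (2 * INR m); [lra|]; rewrite Rmult_0_r, E3; lra.
- unfold Phi, mk3, c1, c2, c3 in HPhi; cbn [fst snd] in HPhi.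
  rewrite pow_mult, <- Hsq; exact HPhi.
- rewrite pow_2m1_sqr, <- Hsq by auto; fold q.
  apply Rmult_eq_reg_l with (2 * INR m); [|lra].
  transitivity (c * (2 * INR m * (q * x1)) + s * (2 * INR m * (q * x2))); [unfold r; ring|].
  rewrite E1, E2; replace (2 * INR m * (- p * z ^ (2 * m - 1))) with (- p * (2 * INR m * z ^ (2 * m - 1))) by ring.
  rewrite E3; transitivity (- p * lam * (c ^ 2 + s ^ 2)); [ring|rewrite cs_unit; ring].
Qed.

Lemma bg_point_of_profile p r z : bg_profile m p r z ->
  Phi m (mk3 (r * c) (r * s) z) = 1 /\
  gradPhi m (mk3 (r * c) (r * s) z) =
    vscal (2 * INR m * z ^ (2 * m - 1)) (mk3 (- (p * c)) (- (p * s)) 1).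
Proof.
intros [Hz [H1 H2]].
assert (Hsq : (r * c) ^ 2 + (r * s) ^ 2 = r ^ 2) by nra.
split.
- unfold Phi, mk3, c1, c2, c3; cbn [fst snd]; rewrite Hsq, <- pow_mult; exact H1.
- rewrite gradPhi_mk3, Hsq by auto.
  assert (Hq : (r ^ 2) ^ (m - 1) * r = - p * z ^ (2 * m - 1)) by (rewrite <- pow_2m1_sqr by auto; exact H2).
  unfold vscal; apply (f_equal3 mk3); unfold mk3, c1, c2, c3; cbn [fst snd].
  + transitivity (2 * INR m * ((r ^ 2) ^ (m - 1) * r) * c); [ring|rewrite Hq; ring].
  + transitivity (2 * INR m * ((r ^ 2) ^ (m - 1) * r) * s); [ring|rewrite Hq; ring].
  + ring.
Qed.

End MeridianPoint.

Lemma pd_s_ext_loc (F G : R -> R -> V3) t v :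
  locally t (fun s => F s v = G s v) -> pd_s F t v = pd_s G t v.
Proof.
intros H; unfold pd_s; apply (f_equal3 mk3); apply Derive_ext_loc;
  apply (filter_imp _ _ (fun s Hs => f_equal _ Hs) H).
Qed.

Lemma pd_v_ext (F G : R -> R -> V3) t v :
  (forall w, F t w = G t w) -> pd_v F t v = pd_v G t v.
Proof. intros H; unfold pd_v; apply (f_equal3 mk3); apply Derive_ext; intros w; rewrite H; reflexivity. Qed.

Lemma rotational_pd_loc (eta : R -> R -> V3) (r z : R -> R) t v :
  locally t (fun s => forall w, eta s w = rotational_map r z s w) ->
  ex_derive r t -> ex_derive z t ->
  ex_pd eta t v /\
  pd_s eta t v = mk3 (Derive r t * cos v) (Derive r t * sin v) (Derive z t) /\
  pd_v eta t v = mk3 (- (r t * sin v)) (r t * cos v) 0.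
Proof.
intros Hloc Hr Hz.
assert (Heta : forall w, eta t w = rotational_map r z t w) by exact (locally_singleton _ _ Hloc).
assert (Hs : forall (i : V3 -> R), locally t (fun s => i (rotational_map r z s v) = i (eta s v)))
  by (intros i; apply (filter_imp _ _ (fun s Hs => f_equal i (eq_sym (Hs v))) Hloc)).
assert (Hv : forall (i : V3 -> R) w, i (rotational_map r z t w) = i (eta t w))
  by (intros i w; rewrite Heta; reflexivity).
split; [|split].
- repeat split;
    [ apply (ex_derive_ext_loc _ _ _ (Hs c1)) | apply (ex_derive_ext_loc _ _ _ (Hs c2))
    | apply (ex_derive_ext_loc _ _ _ (Hs c3)) | apply (ex_derive_ext _ _ _ (Hv c1))
    | apply (ex_derive_ext _ _ _ (Hv c2)) | apply (ex_derive_ext _ _ _ (Hv c3)) ];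
    unfold rotational_map, mk3, c1, c2, c3; cbn [fst snd]; first [exact Hz | auto_derive; auto].
- rewrite <- (pd_s_rotational r z) by exact Hr; apply pd_s_ext_loc.
  apply (filter_imp _ _ (fun s Hs => Hs v) Hloc).
- rewrite <- (pd_v_rotational r z); apply pd_v_ext, Heta.
Qed.

Lemma bg_profile_derive m (u r z : R -> R) t : (1 <= m)%nat ->
  locally t (fun s => bg_profile m (Derive u s) (r s) (z s)) ->
  ex_derive r t -> ex_derive z t -> Derive z t = Derive u t * Derive r t.
Proof.
intros Hm Hloc Hr Hz.
destruct (locally_singleton _ _ Hloc) as [Hzt [_ Hslope]].
assert (Hzp : 0 < z t ^ (2 * m - 1)) by (apply pow_lt; lra).
assert (Hm0 : 0 < INR m) by (apply lt_0_INR; lia).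
assert (D0 : is_derive (fun s => r s ^ (2 * m) + z s ^ (2 * m)) t 0).
{ apply (is_derive_ext_loc (fun _ => 1)); [|auto_derive; auto].
  apply (filter_imp _ _ (fun s Hs => eq_sym (proj1 (proj2 Hs))) Hloc). }
assert (D1 : is_derive (fun s => r s ^ (2 * m) + z s ^ (2 * m)) t
  (2 * INR m * (r t ^ (2 * m - 1) * Derive r t + z t ^ (2 * m - 1) * Derive z t))).
{ auto_derive; auto.
  replace (m + (m + 0))%nat with (2 * m)%nat by lia; rewrite <- Nat.sub_1_r, mult_INR.
  change (fun x => r x) with r; change (fun x => z x) with z; simpl; ring. }
assert (E : 2 * INR m * (r t ^ (2 * m - 1) * Derive r t + z t ^ (2 * m - 1) * Derive z t) = 0)
  by (rewrite <- (is_derive_unique _ _ _ D1); exact (is_derive_unique _ _ _ D0)).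
rewrite Hslope in E.
apply Rmult_eq_reg_l with (2 * INR m * z t ^ (2 * m - 1)); [|nra].
rewrite <- (Rplus_0_l (_ * (Derive u t * Derive r t))), <- E; ring.
Qed.

Section RotationalSurface.

Variables (m : nat) (u : R -> R).
Hypothesis m_pos : (1 <= m)%nat.

Lemma rotSurf_curvature_iff (eta : R -> R -> V3) (r z : R -> R) t v k : 0 < t ->
  locally t (fun s => forall w, eta s w = rotational_map r z s w) ->
  ex_derive r t -> ex_derive z t -> Derive z t = Derive u t * Derive r t ->
  MinkGaussCurvAt (rotSurf u) eta t v k <-> r t * Derive r t = k * t.
Proof.
intros Ht Hloc Hr Hz Hzr.
destruct (rotational_pd_loc eta r z t v Hloc Hr Hz) as [Hex [Hs Hv]].
pose proof (cos_sin_pow2 v) as Hcs.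
unfold MinkGaussCurvAt; rewrite Hs, Hv, pd_s_rotSurf, pd_v_rotSurf.
unfold vadd, vscal, mk3, c1, c2, c3; cbn [fst snd].
split.
- intros [_ [A [B [C [D [E1 [E2 Hk]]]]]]].
  injection E1 as E11 E12 _; injection E2 as E21 E22 _.
  (* in the rotating frame [(cos v, sin v)] both equations become diagonal *)
  destruct (rotation_inj (cos v) (sin v) (Derive r t) 0 A (B * t)) as [HA HB];
    [exact Hcs|rewrite E11; ring|rewrite E12; ring|].
  destruct (rotation_inj (cos v) (sin v) 0 (r t) C (D * t)) as [HC HD];
    [exact Hcs|transitivity (- (r t * sin v)); [ring|rewrite E21; ring]|rewrite E22; ring|].
  assert (B = 0) by (apply Rmult_eq_reg_r with t; lra).
  subst A B C; rewrite HD, <- Hk; ring.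
- intros Hk; split; [exact Hex|].
  exists (Derive r t), 0, 0, (r t / t); split; [|split].
  + rewrite Hzr; apply (f_equal3 (fun a b c => (a, b, c))); ring.
  + apply (f_equal3 (fun a b c => (a, b, c))); field; lra.
  + replace (Derive r t * (r t / t) - 0 * 0) with (r t * Derive r t / t) by (field; lra).
    rewrite Hk; field; lra.
Qed.

Variable D : R -> Prop.
Hypothesis D_pos : forall t, D t -> 0 < t.

Lemma rotSurf_bgm_form (eta : R -> R -> V3) :
  BirkhoffGaussMap m (rotSurf u) eta (fun t _ => D t) -> forall t, D t ->
  (forall v, eta t v = rotational_map (fun s => c1 (eta s 0)) (fun s => c3 (eta s 0)) t v) /\
  bg_profile m (Derive u t) (c1 (eta t 0)) (c3 (eta t 0)).
Proof.
intros HB t Ht.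
assert (Hpt : forall v, exists r z, eta t v = mk3 (r * cos v) (r * sin v) z /\
                                    bg_profile m (Derive u t) r z).
{ intros v; destruct (HB t v Ht) as [HPhi [mu [Hmu HG]]].
  rewrite cross_rotSurf, vscal_vscal in HG.
  apply (bg_point_profile m m_pos (cos v) (sin v) (cos_sin_pow2 v) _ (mu * t)); auto.
  apply Rmult_lt_0_compat; auto. }
destruct (Hpt 0) as [r0 [z0 [E0 P0]]]; rewrite cos_0, sin_0 in E0.
assert (Hr0 : c1 (eta t 0) = r0) by (rewrite E0; unfold c1, mk3; simpl; ring).
assert (Hz0 : c3 (eta t 0) = z0) by (rewrite E0; reflexivity).
rewrite Hr0, Hz0; split; [|exact P0].
intros v; destruct (Hpt v) as [r [z [E P]]].
destruct (bg_profile_unique m m_pos _ _ _ _ _ P P0) as [-> ->].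
rewrite E; unfold rotational_map; rewrite Hr0, Hz0; reflexivity.
Qed.

Lemma rotSurf_bgm_of_profile (r z : R -> R) :
  (forall t, D t -> bg_profile m (Derive u t) (r t) (z t)) ->
  BirkhoffGaussMap m (rotSurf u) (rotational_map r z) (fun t _ => D t).
Proof.
intros Hp t v Ht.
pose proof (Hp t Ht) as Pt.
destruct (bg_point_of_profile m m_pos (cos v) (sin v) (cos_sin_pow2 v) _ _ _ Pt) as [HPhi HG].
split; [exact HPhi|].
assert (Hm : 0 < INR m) by (apply lt_0_INR; lia).
assert (Hzp : 0 < z t ^ (2 * m - 1)) by (apply pow_lt, Pt).
pose proof (D_pos t Ht).
exists (2 * INR m * z t ^ (2 * m - 1) / t); split.
- apply Rdiv_lt_0_compat; [apply Rmult_lt_0_compat|]; lra.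
- rewrite cross_rotSurf, vscal_vscal; unfold rotational_map; rewrite HG.
  f_equal; field; lra.
Qed.

End RotationalSurface.

Section ConstantCurvature.

Variables (m : nat) (u : R -> R) (K a : R) (b : Rbar).
Hypothesis m_pos : (1 <= m)%nat.
Hypothesis a_nonneg : 0 <= a.

Let J := inJ a b.

Lemma eq_rotational_locally (eta : R -> R -> V3) (r z : R -> R) :
  (forall t, J t -> forall v, eta t v = rotational_map r z t v) ->
  forall t, J t -> locally t (fun s => forall w, eta s w = rotational_map r z s w).
Proof. intros H t Ht; apply (filter_imp _ _ H (inJ_locally a b t Ht)). Qed.

Lemma const_curvature_meridian_ode (eta : R -> R -> V3) :
  BirkhoffGaussMap m (rotSurf u) eta (fun t _ => J t) ->
  (forall t v, J t -> MinkGaussCurvAt (rotSurf u) eta t v K) ->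
  forall t, J t -> ex_derive (fun s => c1 (eta s 0)) t /\
    (fun s => c1 (eta s 0)) t * Derive (fun s => c1 (eta s 0)) t = K * t.
Proof.
intros HB HC t Ht.
set (r := fun s => c1 (eta s 0)); set (z := fun s => c3 (eta s 0)).
pose proof (rotSurf_bgm_form m u m_pos J (fun s => inJ_pos a b s a_nonneg) eta HB) as Hform.
assert (Hloc : forall s, J s -> locally s (fun s' => forall w, eta s' w = rotational_map r z s' w))
  by (apply eq_rotational_locally; intros s Hs; apply Hform, Hs).
destruct (HC t 0 Ht) as [[Hr [_ [Hz _]]] _].
split; [exact Hr|].
apply (rotSurf_curvature_iff u eta r z t 0 K (inJ_pos a b t a_nonneg Ht) (Hloc t Ht) Hr Hz).
- apply (bg_profile_derive m u r z t m_pos); auto.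
  apply (filter_imp _ _ (fun s Hs => proj2 (Hform s Hs)) (inJ_locally a b t Ht)).
- apply HC, Ht.
Qed.

Lemma meridian_ode_integral (r : R -> R) : Rbar_lt a b ->
  (forall t, J t -> ex_derive r t) -> (forall t, J t -> r t * Derive r t = K * t) ->
  exists c, forall t, J t -> r t ^ 2 = K * t ^ 2 + c.
Proof.
intros Hab Hd Hrr; destruct (inJ_inhabited a b Hab) as [t0 Ht0].
exists (r t0 ^ 2 - K * t0 ^ 2); intros t Ht.
enough (r t ^ 2 - K * t ^ 2 = r t0 ^ 2 - K * t0 ^ 2) by lra.
apply (is_derive_0_const J (inJ_convex a b) (fun s => r s ^ 2 - K * s ^ 2)); auto.
intros s Hs; auto_derive; [apply Hd, Hs|].
change (fun x => r x) with r.
transitivity (2 * (r s * Derive r s - K * s)); [ring|rewrite (Hrr s Hs); ring].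
Qed.

Lemma const_curvature_slope :
  Rbar_lt a b -> (forall t, J t -> Derive u t <> 0) ->
  ConstMinkGaussCurv m (rotSurf u) (fun t _ => J t) K ->
  exists c, (forall t, J t -> 0 < K * t ^ 2 + c < 1) /\
    exists eps, (eps = 1 \/ eps = -1) /\
      forall t, J t -> Derive u t = meridian_slope m eps (K * t ^ 2 + c).
Proof.
intros Hab Hu [[eta HB] HC].
pose proof (rotSurf_bgm_form m u m_pos J (fun s => inJ_pos a b s a_nonneg) eta HB) as Hform.
pose proof (const_curvature_meridian_ode eta HB (HC eta HB)) as Hmer.
set (r := fun s => c1 (eta s 0)); set (z := fun s => c3 (eta s 0)).
assert (Hprof : forall t, J t -> bg_profile m (Derive u t) (r t) (z t)) by apply Hform.
assert (Hd : forall t, J t -> ex_derive r t) by apply Hmer.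
assert (Hrr : forall t, J t -> r t * Derive r t = K * t) by apply Hmer.
clearbody r z; clear Hform Hmer HC HB.
assert (Hnz : forall t, J t -> r t <> 0)
  by (intros t Ht; apply (bg_profile_neq0 m m_pos (Derive u t) _ (z t)); auto).
assert (Hrange : forall t, J t -> 0 < r t ^ 2 < 1).
{ intros t Ht; split; [|exact (bg_profile_sqr_lt1 m _ _ _ (Hprof t Ht))].
  rewrite <- Rsqr_pow2; apply Rsqr_pos_lt, Hnz, Ht. }
destruct (meridian_ode_integral r Hab Hd Hrr) as [c Hsq].
destruct (inJ_inhabited a b Hab) as [t0 Ht0].
destruct (nonvanishing_sign J (inJ_convex a b) r t0 Hd Hnz Ht0) as [eps [Heps Hsign]].
exists c; split.
- intros t Ht; rewrite <- Hsq by exact Ht; apply Hrange, Ht.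
- exists (- eps); split; [destruct Heps; [right|left]; lra|].
  intros t Ht.
  assert (Er : r t = - (- eps) * sqrt (K * t ^ 2 + c)).
  { rewrite <- Hsq, <- pow2_abs, sqrt_pow2 by (exact Ht || apply Rabs_pos).
    rewrite (Hsign t Ht) at 1; ring. }
  eapply (bg_profile_slope_unique m m_pos _ _ (r t) (z t) _ (Hprof t Ht)).
  rewrite Er; apply bg_profile_explicit; auto.
  + destruct Heps; [right|left]; lra.
  + rewrite <- Hsq by exact Ht; apply Hrange, Ht.
Qed.

Lemma slope_const_curvature :
  (exists c, (forall t, J t -> 0 < K * t ^ 2 + c < 1) /\
    exists eps, (eps = 1 \/ eps = -1) /\
      forall t, J t -> Derive u t = meridian_slope m eps (K * t ^ 2 + c)) ->
  ConstMinkGaussCurv m (rotSurf u) (fun t _ => J t) K.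
Proof.
intros [c [Hrange [eps [Heps Hder]]]].
set (r := fun t => - eps * sqrt (K * t ^ 2 + c)).
set (z := fun t => Rpower (1 - (K * t ^ 2 + c) ^ m) (/ (2 * INR m))).
assert (Hprof : forall t, J t -> bg_profile m (Derive u t) (r t) (z t))
  by (intros t Ht; rewrite (Hder t Ht); apply bg_profile_explicit; auto).
pose proof (fun s => inJ_pos a b s a_nonneg) as J_pos.
split.
- exists (rotational_map r z); exact (rotSurf_bgm_of_profile m u m_pos J J_pos r z Hprof).
- intros eta HB t v Ht.
  assert (Heta : forall s, J s -> forall w, eta s w = rotational_map r z s w).
  { intros s Hs w; destruct (rotSurf_bgm_form m u m_pos J J_pos eta HB s Hs) as [E P].
    destruct (bg_profile_unique m m_pos _ _ _ _ _ P (Hprof s Hs)) as [Er Ez].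
    rewrite E; unfold rotational_map; cbv beta; rewrite Er, Ez; reflexivity. }
  pose proof (Hrange t Ht) as Hw.
  assert (Hsqrt : 0 < sqrt (K * t ^ 2 + c)) by (apply sqrt_lt_R0; lra).
  assert (Dr : is_derive r t (- eps * (K * t / sqrt (K * t ^ 2 + c))))
    by (unfold r; auto_derive; replace (K * (t * (t * 1)) + c) with (K * t ^ 2 + c) by ring;
        [lra|field; lra]).
  assert (Hz : ex_derive z t).
  { pose proof (pow_lt_1_compat (K * t ^ 2 + c) m ltac:(lra) ltac:(lia)).
    unfold z, Rpower; auto_derive; replace (K * (t * (t * 1)) + c) with (K * t ^ 2 + c) by ring; lra. }
  apply (rotSurf_curvature_iff u eta r z t v K (J_pos t Ht) (eq_rotational_locally eta r z Heta t Ht));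
    [eexists; exact Dr|exact Hz| |].
  + apply (bg_profile_derive m u r z t m_pos); [|eexists; exact Dr|exact Hz].
    apply (filter_imp _ _ Hprof (inJ_locally a b t Ht)).
  + rewrite (is_derive_unique _ _ _ Dr); unfold r.
    transitivity (eps ^ 2 * K * t * (sqrt (K * t ^ 2 + c) / sqrt (K * t ^ 2 + c))); [field; lra|].
    replace (eps ^ 2) with 1 by (destruct Heps as [->| ->]; ring); field; lra.
Qed.

End ConstantCurvature.

Theorem theorem5p1 (m : nat) (hm : (2 <= m)%nat) (K : R) (hK : K <> 0)
  (a : R) (b : Rbar) (ha : 0 <= a) (hab : Rbar_lt a b)
  (u : R -> R)
  (hsmooth : forall (n : nat) (x : R), inJ a b x -> ex_derive_n u n x)
  (hu' : forall x, inJ a b x -> Derive u x <> 0) :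
  ConstMinkGaussCurv m (rotSurf u) (fun alpha _ => inJ a b alpha) K <->
  exists c1 : R,
    (forall alpha, inJ a b alpha -> 0 < K * alpha ^ 2 + c1 < 1) /\
    exists eps : R, (eps = 1 \/ eps = -1) /\
      forall alpha, inJ a b alpha ->
        Derive u alpha =
          eps * Rpower (K * alpha ^ 2 + c1) ((2 * INR m - 1) / 2)
            / Rpower (1 - (K * alpha ^ 2 + c1) ^ m)
                     ((2 * INR m - 1) / (2 * INR m)).
Proof.
assert (m_pos : (1 <= m)%nat) by lia.
split.
- exact (const_curvature_slope m u K a b m_pos ha hab hu').
- exact (slope_const_curvature m u K a b m_pos ha).
Qed.
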